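(* Under the standing assumptions, there exist constants $\mathcal B^L_\Omega>0$ and $\mathcal B^P_\Omega>0$ such that for all $L,L'\in\Omega$ with $\|L'-L\|\le\mathcal B^L_\Omega$, one has $\|P_{L'}^*-P_L^*\|\le\mathcal B^P_\Omega\|L'-L\|$.
   Context: Zero-sum LQ game: $A\in\mathbb R^{d\times d}$, $B\in\mathbb R^{d\times m_1}$, $C\in\mathbb R^{d\times m_2}$, symmetric positive definite $Q,R^u,R^v$; $\Sigma_0=\mathbb E[x_0x_0^\top]\succ0$. For $L$ with $Q-L^\top R^vL\succ0$, $P_L^*\succ0$ is the solution of the inner Riccati equation $P=Q-L^\top R^vL+(A-CL)^\top P(A-CL)-(A-CL)^\top PB(R^u+B^\top PB)^{-1}B^\top P(A-CL)$ for which $A-CL-BK(L)$, $K(L)=(R^u+B^\top P_L^*B)^{-1}B^\top P_L^*(A-CL)$, has spectral radius $<1$. Assumption: the GARE $P=A^\top PA+Q-[A^\top PB\ \ A^\top PC]\begin{bmatrix}R^u+B^\top PB & B^\top PC\\ C^\top PB & -R^v+C^\top PC\end{bmatrix}^{-1}\begin{bmatrix}B^\top PA\\ C^\top PA\end{bmatrix}$ has (i) a minimal positive definite solution $P^*$ with $R^v-C^\top P^*C\succ0$; (ii) $Q-(L^* )^\top R^vL^*\succ0$ where $L^*=[-R^v+C^\top P^*C-C^\top P^*B(R^u+B^\top P^*B)^{-1}B^\top P^*C]^{-1}[C^\top P^*A-C^\top P^*B(R^u+B^\top P^*B)^{-1}B^\top P^*A]$. $0<\zeta<\sigma_{\min}(Q-(L^*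 )^\top R^vL^* )$, $\Omega=\{L:Q-L^\top R^vL\succeq\zeta I\}$. $\|\cdot\|$ is the spectral norm. *)

From Stdlib Require Import Reals Lra.
From Stdlib Require Import Classical ClassicalEpsilon FunctionalExtensionality.
From HB Require Import structures.
From mathcomp Require Import all_boot all_order all_algebra.
Set Implicit Arguments. Unset Strict Implicit. Unset Printing Implicit Defensive.
Import GRing.Theory.

Definition Req_bool (x y : R) : bool := if Req_EM_T x y then true else false.
Lemma Req_boolP : Equality.axiom Req_bool.
Proof. move=> x y; rewrite /Req_bool; case: Req_EM_T => h; constructor => //. Qed.
HB.instance Definition _ := hasDecEq.Build R Req_boolP.

Definition Rfind (P : pred R) (n : nat) : option R :=
  match excluded_middle_informative (exists x, P x) with
  | left h => Some (proj1_sig (constructive_indefinite_description _ h))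
  | right _ => None
  end.
Lemma Rfind_correct P n x : Rfind P n = Some x -> P x.
Proof.
rewrite /Rfind; case: excluded_middle_informative => // h [<-].
exact: (proj2_sig (constructive_indefinite_description _ h)).
Qed.
Lemma Rfind_complete (P : pred R) : (exists x, P x) -> exists n, Rfind P n.
Proof. move=> h; exists 0%N; rewrite /Rfind; case: excluded_middle_informative => //. Qed.
Lemma Rfind_ext (P Q : pred R) : P =1 Q -> Rfind P =1 Rfind Q.
Proof. move=> /functional_extensionality ->; done. Qed.
HB.instance Definition _ := hasChoice.Build R Rfind_correct Rfind_complete Rfind_ext.

Lemma R_addrA : associative Rplus. Proof. move=> *; ring. Qed.
Lemma R_addrC : commutative Rplus. Proof. move=> *; ring. Qed.
Lemma R_add0r : left_id R0 Rplus. Proof. move=> *; ring. Qed.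
Lemma R_addNr : left_inverse R0 Ropp Rplus. Proof. move=> *; ring. Qed.
HB.instance Definition _ := GRing.isZmodule.Build R R_addrA R_addrC R_add0r R_addNr.

Lemma R_mulrA : associative Rmult. Proof. move=> *; ring. Qed.
Lemma R_mulrC : commutative Rmult. Proof. move=> *; ring. Qed.
Lemma R_mul1r : left_id R1 Rmult. Proof. move=> *; ring. Qed.
Lemma R_mulrDl : left_distributive Rmult Rplus. Proof. move=> *; ring. Qed.
Lemma R_oner_neq0 : R1 != R0.
Proof. apply/eqP; exact: R1_neq_R0. Qed.
HB.instance Definition _ := GRing.Zmodule_isComNzRing.Build R
  R_mulrA R_mulrC R_mul1r R_mulrDl R_oner_neq0.

Lemma R_mulVf (x : R) : x != 0%R -> Rmult (Rinv x) x = R1.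
Proof. move=> /eqP h; apply: Rinv_l; exact: h. Qed.
HB.instance Definition _ := GRing.ComNzRing_isField.Build R R_mulVf Rinv_0.

Local Open Scope ring_scope.

Definition posdef (n : nat) (M : 'M[R]_n) : Prop :=
  M^T = M /\ forall x : 'cV[R]_n, x <> 0 -> Rlt R0 ((x^T *m M *m x) ord0 ord0).

Definition psd (n : nat) (M : 'M[R]_n) : Prop :=
  M^T = M /\ forall x : 'cV[R]_n, Rle R0 ((x^T *m M *m x) ord0 ord0).

Definition vnorm (n : nat) (x : 'cV[R]_n) : R :=
  sqrt (\sum_(i < n) x i ord0 ^+ 2).

(* spectral norm = operator norm induced by the Euclidean norm:
   ‖M‖ = sup { |M x| : |x| = 1 }  (0 is included to cover n = 0) *)
Definition spec_norm (m n : nat) (M : 'M[R]_(m, n)) : R :=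
  epsilon (inhabits R0)
    (is_lub (fun r => r = R0 \/ exists x : 'cV[R]_n, vnorm x = R1 /\ r = vnorm (M *m x))).

Definition is_glb (E : R -> Prop) (m : R) : Prop :=
  (forall x, E x -> Rle m x) /\ (forall b, (forall x, E x -> Rle b x) -> Rle b m).

Definition sigma_min (n : nat) (M : 'M[R]_n) : R :=
  epsilon (inhabits R0)
    (is_glb (fun r => exists x : 'cV[R]_n, vnorm x = R1 /\ r = vnorm (M *m x))).

(* a + i b is a (complex) eigenvalue of the real matrix M :
   there is a nonzero complex vector u + i v with M (u + i v) = (a + i b)(u + i v) *)
Definition is_eigenvalue (n : nat) (M : 'M[R]_n) (a b : R) : Prop :=
  exists u v : 'cV[R]_n, (u <> 0 \/ v <> 0) /\
    M *m u = a *: u - b *: v /\ M *m v = b *: u + a *: v.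

(* spectral radius = max modulus of the (complex) eigenvalues (0 if n = 0) *)
Definition spec_rad (n : nat) (M : 'M[R]_n) : R :=
  epsilon (inhabits R0)
    (is_lub (fun r => r = R0 \/
       exists a b, is_eigenvalue M a b /\ r = sqrt (Rplus (Rmult a a) (Rmult b b)))).

Definition inner_riccati_rhs (d m1 m2 : nat) (A : 'M[R]_d) (B : 'M[R]_(d, m1))
    (C : 'M[R]_(d, m2)) (Q : 'M[R]_d) (Ru : 'M[R]_m1) (Rv : 'M[R]_m2)
    (L : 'M[R]_(m2, d)) (P : 'M[R]_d) : 'M[R]_d :=
  let Acl := A - C *m L in
  Q - L^T *m Rv *m L + Acl^T *m P *m Acl
    - Acl^T *m P *m B *m invmx (Ru + B^T *m P *m B) *m B^T *m P *m Acl.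

Definition K_of (d m1 m2 : nat) (A : 'M[R]_d) (B : 'M[R]_(d, m1))
    (C : 'M[R]_(d, m2)) (Ru : 'M[R]_m1)
    (L : 'M[R]_(m2, d)) (P : 'M[R]_d) : 'M[R]_(m1, d) :=
  invmx (Ru + B^T *m P *m B) *m B^T *m P *m (A - C *m L).

Definition is_Pstar (d m1 m2 : nat) (A : 'M[R]_d) (B : 'M[R]_(d, m1))
    (C : 'M[R]_(d, m2)) (Q : 'M[R]_d) (Ru : 'M[R]_m1) (Rv : 'M[R]_m2)
    (L : 'M[R]_(m2, d)) (P : 'M[R]_d) : Prop :=
  posdef P /\ P = inner_riccati_rhs A B C Q Ru Rv L P /\
  Rlt (spec_rad (A - C *m L - B *m K_of A B C Ru L P)) R1.

Definition gare_mid (d m1 m2 : nat) (B : 'M[R]_(d, m1)) (C : 'M[R]_(d, m2))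
    (Ru : 'M[R]_m1) (Rv : 'M[R]_m2) (P : 'M[R]_d) : 'M[R]_(m1 + m2) :=
  block_mx (Ru + B^T *m P *m B) (B^T *m P *m C)
           (C^T *m P *m B) (- Rv + C^T *m P *m C).

Definition solves_GARE (d m1 m2 : nat) (A : 'M[R]_d) (B : 'M[R]_(d, m1))
    (C : 'M[R]_(d, m2)) (Q : 'M[R]_d) (Ru : 'M[R]_m1) (Rv : 'M[R]_m2)
    (P : 'M[R]_d) : Prop :=
  gare_mid B C Ru Rv P \in unitmx /\
  P = A^T *m P *m A + Q
      - row_mx (A^T *m P *m B) (A^T *m P *m C)
        *m invmx (gare_mid B C Ru Rv P)
        *m col_mx (B^T *m P *m A) (C^T *m P *m A).

Definition minimal_pd_GARE_sol (d m1 m2 : nat) (A : 'M[R]_d) (B : 'M[R]_(d, m1))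
    (C : 'M[R]_(d, m2)) (Q : 'M[R]_d) (Ru : 'M[R]_m1) (Rv : 'M[R]_m2)
    (P : 'M[R]_d) : Prop :=
  posdef P /\ solves_GARE A B C Q Ru Rv P /\
  forall P' : 'M[R]_d, posdef P' -> solves_GARE A B C Q Ru Rv P' -> psd (P' - P).

Definition Lstar (d m1 m2 : nat) (A : 'M[R]_d) (B : 'M[R]_(d, m1))
    (C : 'M[R]_(d, m2)) (Ru : 'M[R]_m1) (Rv : 'M[R]_m2)
    (P : 'M[R]_d) : 'M[R]_(m2, d) :=
  let G := invmx (Ru + B^T *m P *m B) in
  invmx (- Rv + C^T *m P *m C - C^T *m P *m B *m G *m B^T *m P *m C)
  *m (C^T *m P *m A - C^T *m P *m B *m G *m B^T *m P *m A).

Definition in_Omega (d m2 : nat) (Q : 'M[R]_d) (Rv : 'M[R]_m2) (zeta : R)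
    (L : 'M[R]_(m2, d)) : Prop :=
  psd (Q - L^T *m Rv *m L - zeta%:M).

From Stdlib Require Import Reals Lra ClassicalEpsilon.
From mathcomp Require Import all_boot all_order all_algebra.
Local Open Scope ring_scope.
Import GRing.Theory.
Set Implicit Arguments. Unset Strict Implicit.

(* All estimates are made on quadratic forms x^T M x, written [bf M x x].
   - Linear-algebra toolkit: inner product and bilinear forms, Cauchy–Schwarz
     for positive semidefinite forms, the spectral norm (existence of the
     supremum, |M x| <= ||M|| |x| and its converse), and polarization: a
     symmetric D with |x^T D x| <= c |x|^2 has ||D|| <= c.
   - A Lyapunov comparison principle: if V >= 0, V <= p |z|^2, decreases by
     c |z|^2 along a map F, then every g that never decreases along F and is
     bounded by a multiple of |z|^2 is nonpositive.
   - Completion of squares: P_L^* is the least cost over all gains K, attained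
     at K(L) (inner Riccati equation); the GARE yields a gain K^* whose cost is
     at most P^* against every L (since R^v - C^T P^* C > 0).
   - On Omega every stage cost is >= zeta |x|^2, so the comparison principle
     gives P_L^* <= P^*, hence a uniform bound p; perturbing L to L' in the
     stage cost and in the closed loop costs O(||L' - L||), and the comparison
     principle along A - C L' - B K(L) gives x^T D x <= B_P ||L' - L|| |x|^2
     for D = P_L'^* - P_L^*.
   The main theorem follows by exchanging L and L' and polarizing. *)

Definition dot n (u v : 'cV[R]_n) : R := (u^T *m v) ord0 ord0.
Definition bf n (M : 'M[R]_n) (u v : 'cV[R]_n) : R := dot u (M *m v).

Section InnerProduct.
Variable n : nat.
Implicit Types u v w : 'cV[R]_n.
Implicit Types M N : 'M[R]_n.

Lemma dot_sum u v : dot u v = \sum_(i < n) u i ord0 * v i ord0.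
Proof. by rewrite /dot mxE; apply: eq_bigr => i _; rewrite mxE. Qed.

Lemma dot_ge0 u : Rle R0 (dot u u).
Proof.
rewrite dot_sum; apply: (big_ind (fun x => Rle R0 x)).
- exact: Rle_refl.
- by move=> x y hx hy; apply: Rplus_le_le_0_compat.
- by move=> i _; apply: Rle_0_sqr.
Qed.

Lemma dotC u v : dot u v = dot v u.
Proof. by rewrite !dot_sum; apply: eq_bigr => i _; rewrite mulrC. Qed.
Lemma dotDl u v w : dot (u + v) w = Rplus (dot u w) (dot v w).
Proof. by rewrite /dot linearD /= mulmxDl mxE. Qed.
Lemma dotDr u v w : dot w (u + v) = Rplus (dot w u) (dot w v).
Proof. by rewrite /dot mulmxDr mxE. Qed.
Lemma dotNl u v : dot (- u) v = Ropp (dot u v).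
Proof. by rewrite /dot linearN /= mulNmx mxE. Qed.
Lemma dotNr u v : dot u (- v) = Ropp (dot u v).
Proof. by rewrite /dot mulmxN mxE. Qed.
Lemma dotBl u v w : dot (u - v) w = Rminus (dot u w) (dot v w).
Proof. by rewrite dotDl dotNl. Qed.
Lemma dotBr u v w : dot w (u - v) = Rminus (dot w u) (dot w v).
Proof. by rewrite dotDr dotNr. Qed.
Lemma dotZl a u v : dot (a *: u) v = Rmult a (dot u v).
Proof. by rewrite /dot linearZ /= -scalemxAl mxE. Qed.
Lemma dotZr a u v : dot u (a *: v) = Rmult a (dot u v).
Proof. by rewrite /dot -scalemxAr mxE. Qed.
Lemma dot0r u : dot u 0 = R0.
Proof. by rewrite /dot mulmx0 mxE. Qed.

Lemma dot_mul m (M : 'M[R]_(n, m)) u (v : 'cV[R]_m) : dot u (M *m v) = dot (M^T *m u) v.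
Proof. by rewrite /dot trmx_mul trmxK mulmxA. Qed.

Lemma bfE M u v : bf M u v = (u^T *m M *m v) ord0 ord0.
Proof. by rewrite /bf /dot mulmxA. Qed.
Lemma bfD M N u v : bf (M + N) u v = Rplus (bf M u v) (bf N u v).
Proof. by rewrite /bf mulmxDl dotDr. Qed.
Lemma bfN M u v : bf (- M) u v = Ropp (bf M u v).
Proof. by rewrite /bf mulNmx dotNr. Qed.
Lemma bfB M N u v : bf (M - N) u v = Rminus (bf M u v) (bf N u v).
Proof. by rewrite bfD bfN. Qed.
Lemma bf_scalar a u v : bf a%:M u v = Rmult a (dot u v).
Proof. by rewrite /bf mul_scalar_mx dotZr. Qed.
Lemma bf1 u v : bf 1%:M u v = dot u v.
Proof. by rewrite /bf mul1mx. Qed.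
Lemma bfDl M u v w : bf M (u + v) w = Rplus (bf M u w) (bf M v w).
Proof. by rewrite /bf dotDl. Qed.
Lemma bfDr M u v w : bf M w (u + v) = Rplus (bf M w u) (bf M w v).
Proof. by rewrite /bf mulmxDr dotDr. Qed.
Lemma bfBl M u v w : bf M (u - v) w = Rminus (bf M u w) (bf M v w).
Proof. by rewrite /bf dotBl. Qed.
Lemma bfBr M u v w : bf M w (u - v) = Rminus (bf M w u) (bf M w v).
Proof. by rewrite /bf mulmxBr dotBr. Qed.
Lemma bfZl M a u v : bf M (a *: u) v = Rmult a (bf M u v).
Proof. by rewrite /bf dotZl. Qed.
Lemma bfZr M a u v : bf M u (a *: v) = Rmult a (bf M u v).
Proof. by rewrite /bf -scalemxAr dotZr. Qed.
Lemma bf_sym M u v : M^T = M -> bf M u v = bf M v u.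
Proof. by move=> hM; rewrite /bf dot_mul hM dotC. Qed.
Lemma bf00 M : bf M 0 0 = R0.
Proof. by rewrite /bf mulmx0 dot0r. Qed.

Lemma bf_quadD M u v : M^T = M ->
  bf M (u + v) (u + v) = Rplus (Rplus (bf M u u) (Rmult 2 (bf M u v))) (bf M v v).
Proof. by move=> hM; rewrite !bfDl !bfDr (bf_sym v u hM); ring. Qed.
Lemma bf_quadB M u v : M^T = M ->
  bf M (u - v) (u - v) = Rplus (Rminus (bf M u u) (Rmult 2 (bf M u v))) (bf M v v).
Proof. by move=> hM; rewrite !bfBl !bfBr (bf_sym v u hM) /Rminus; ring. Qed.
End InnerProduct.

Lemma dot_mulmx k p (M : 'M[R]_k) (N : 'M[R]_(k, p)) (u : 'cV[R]_k) (v : 'cV[R]_p) :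
  dot u (M *m N *m v) = bf M u (N *m v).
Proof. by rewrite /bf mulmxA. Qed.

Lemma dot_congr k n1 n2 (N : 'M[R]_(k, n1)) (M : 'M[R]_k) (N' : 'M[R]_(k, n2)) u v :
  dot u (N^T *m M *m N' *m v) = bf M (N *m u) (N' *m v).
Proof. by rewrite /bf -!mulmxA dot_mul trmxK. Qed.

Lemma dot_congr_mul k n1 n2 p (N : 'M[R]_(k, n1)) (M : 'M[R]_k) (N' : 'M[R]_(k, n2))
    (G : 'M[R]_(n2, p)) u v :
  dot u (N^T *m M *m N' *m G *m v) = bf M (N *m u) (N' *m (G *m v)).
Proof. by rewrite -[_ *m G *m v]mulmxA dot_congr. Qed.

Lemma bf_congr k n (N : 'M[R]_(k, n)) (M : 'M[R]_k) (N' : 'M[R]_(k, n)) u v :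
  bf (N^T *m M *m N') u v = bf M (N *m u) (N' *m v).
Proof. exact: dot_congr. Qed.


Definition psd_form n (M : 'M[R]_n) : Prop := M^T = M /\ forall x, Rle R0 (bf M x x).

Lemma psd_psd_form n (M : 'M[R]_n) : psd M -> psd_form M.
Proof. by move=> [hs hp]; split=> // x; rewrite bfE. Qed.

Lemma posdef_psd_form n (M : 'M[R]_n) : posdef M -> psd_form M.
Proof.
move=> [hs hp]; split=> // x.
have [->|hx] := eqVneq x 0; first by rewrite bf00; apply: Rle_refl.
by apply: Rlt_le; rewrite bfE; apply: hp; apply/eqP.
Qed.

Lemma psd_form_id n : psd_form (1%:M : 'M[R]_n).
Proof. by split; [apply: tr_scalar_mx | move=> x; rewrite bf1; apply: dot_ge0]. Qed.

(* A positive definite matrix is invertible: a kernel vector v gives v^T M v = 0. *)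
Lemma posdef_unit n (M : 'M[R]_n) : posdef M -> M \in unitmx.
Proof.
move=> [hs hp]; rewrite unitmxE unitfE; apply/negP => /det0P [v hv0 hv].
have hx : v^T <> 0 by move=> e; move/eqP: hv0; apply; rewrite -(trmxK v) e trmx0.
by have := hp _ hx; rewrite trmxK hv mul0mx mxE => /Rlt_irrefl.
Qed.

Section RealInequalities.
Local Open Scope R_scope.

Lemma discriminant_le a b c : 0 <= c -> (forall t, 0 <= a - 2 * t * b + t * t * c) ->
  b * b <= a * c.
Proof.
move=> hc h.
have ha : 0 <= a by have := h 0; lra.
have [hc'|c0] : 0 < c \/ c = 0 by lra.
- have := h (b / c).
  have -> : a - 2 * (b / c) * b + b / c * (b / c) * c = a - b * b / c by field; lra.
  move=> h1; have : 0 <= (a - b * b / c) * c by apply: Rmult_le_pos; lra.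
  have -> : (a - b * b / c) * c = a * c - b * b by field; lra.
  lra.
- subst c; have [->|hb] := Req_dec b 0; first lra.
  have := h ((a + 1) / (2 * b)).
  have -> : a - 2 * ((a + 1) / (2 * b)) * b + (a + 1) / (2 * b) * ((a + 1) / (2 * b)) * 0
    = -1 by field.
  lra.
Qed.

Lemma abs_le_of_sqr x y : 0 <= y -> x * x <= y * y -> Rabs x <= y.
Proof. by move=> hy h; rewrite -(Rabs_pos_eq y hy); apply: Rsqr_le_abs_0; rewrite /Rsqr; lra. Qed.

Lemma abs_le_inv x y : Rabs x <= y -> - y <= x <= y.
Proof. by move=> h; have := Rle_abs x; have := Rle_abs (- x); rewrite Rabs_Ropp; lra. Qed.

Lemma cross_term_le z X Y a b e N : 0 <= X -> X <= a * N -> 0 <= Y -> Y <= b * (e * e) * N ->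
  0 <= a -> 0 <= b -> 0 <= e -> 0 <= N -> z * z <= X * Y -> Rabs z <= (a + b) * e * N.
Proof.
move=> hX hXa hY hYb ha hb he hN hz; apply: abs_le_of_sqr.
  by apply: Rmult_le_pos => //; apply: Rmult_le_pos => //; lra.
apply: Rle_trans hz _.
have h1 : X * Y <= (a * N) * (b * (e * e) * N) by apply: Rmult_le_compat.
apply: Rle_trans h1 _.
have hab : a * b <= (a + b) * (a + b) by nra.
have heN : 0 <= (e * N) * (e * N) by nra.
have -> : a * N * (b * (e * e) * N) = (a * b) * ((e * N) * (e * N)) by ring.
have -> : (a + b) * e * N * ((a + b) * e * N) = ((a + b) * (a + b)) * ((e * N) * (e * N)) by ring.
by apply: Rmult_le_compat_r.
Qed.

(* If 2 t N <= c X + c t^2 N for every t, then N <= c^2 X (take t = 1/c). *)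
Lemma polarization_le N X c : 0 <= c -> 0 <= N -> 0 <= X ->
  (forall t, 2 * t * N <= c * X + c * (t * t) * N) -> N <= c * c * X.
Proof.
move=> hc hN hX h.
have [c0|hc'] : c = 0 \/ 0 < c by lra.
  by subst c; have := h 1; lra.
have := h (/ c).
have -> : 2 * / c * N = (2 * N) / c by field; lra.
have -> : c * (/ c * / c) * N = N / c by field; lra.
move=> h1; have : N / c * c <= c * X * c by apply: Rmult_le_compat_r; lra.
have -> : N / c * c = N by field; lra.
lra.
Qed.

Lemma le0_of_geometric_bound a rho M : 0 <= rho < 1 ->
  (forall t, a <= rho ^ t * M) -> a <= 0.
Proof.
move=> hrho h; apply: Rnot_lt_le => ha.
have hM : 0 < M by have := h 0%nat; rewrite pow_O; lra.
have [t ht] := pow_lt_1_zero rho (ltac:(rewrite Rabs_pos_eq; lra)) (a / M)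
  (Rdiv_lt_0_compat _ _ ha hM).
have := ht t (le_n t); rewrite Rabs_pos_eq; last by apply: pow_le; lra.
move=> hlt; have := Rmult_lt_compat_r M _ _ hM hlt.
have -> : a / M * M = a by field; lra.
by have := h t; lra.
Qed.
End RealInequalities.

Lemma bf_cauchy_schwarz n (M : 'M[R]_n) u v : psd_form M ->
  Rle (Rmult (bf M u v) (bf M u v)) (Rmult (bf M u u) (bf M v v)).
Proof.
move=> [hs hp]; apply: discriminant_le; first exact: hp.
move=> t; have := hp (u - t *: v).
rewrite bf_quadB // !bfZr bfZl.
have -> : Rmult t (Rmult t (bf M v v)) = Rmult (Rmult t t) (bf M v v) by ring.
by have -> : Rmult 2 (Rmult t (bf M u v)) = Rmult (Rmult 2 t) (bf M u v) by ring.
Qed.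

Lemma bf_cross_le n (M : 'M[R]_n) u v a b e N : psd_form M ->
  Rle R0 a -> Rle R0 b -> Rle R0 e -> Rle R0 N ->
  Rle (bf M u u) (Rmult a N) -> Rle (bf M v v) (Rmult (Rmult b (Rmult e e)) N) ->
  Rle (Rabs (bf M u v)) (Rmult (Rmult (Rplus a b) e) N).
Proof.
move=> hM ha hb he hN hu hv; have [_ hp] := hM.
exact: cross_term_le (hp u) hu (hp v) hv ha hb he hN (bf_cauchy_schwarz u v hM).
Qed.

Section SpectralNorm.

Lemma sqr_le_of_sqrt_le a b : Rle R0 a -> Rle (sqrt a) b -> Rle a (Rmult b b).
Proof.
move=> ha hb; have h0 := sqrt_pos a.
by rewrite -(sqrt_sqrt a ha); apply: Rmult_le_compat.
Qed.

Lemma sum_le n (f g : 'I_n -> R) : (forall i, Rle (f i) (g i)) ->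
  Rle (\sum_(i < n) f i) (\sum_(i < n) g i).
Proof.
move=> h; apply: (big_ind2 (fun a b => Rle a b)) => //; first exact: Rle_refl.
by move=> *; apply: Rplus_le_compat.
Qed.

(* Every matrix is bounded: |M x|^2 <= c |x|^2, with c the sum of squared row norms. *)
Lemma mx_bounded m n (M : 'M[R]_(m, n)) : exists c, Rle R0 c /\
  forall x, Rle (dot (M *m x) (M *m x)) (Rmult c (dot x x)).
Proof.
exists (\sum_(i < m) dot (row i M)^T (row i M)^T); split.
  apply: (big_ind (fun x => Rle R0 x)); first exact: Rle_refl.
    by move=> *; apply: Rplus_le_le_0_compat.
  by move=> i _; apply: dot_ge0.
move=> x; rewrite [X in Rle X _]dot_sum.
have -> : Rmult (\sum_(i < m) dot (row i M)^T (row i M)^T) (dot x x)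
  = \sum_(i < m) (dot (row i M)^T (row i M)^T * dot x x) by rewrite -mulr_suml.
apply: sum_le => i.
have -> : (M *m x) i ord0 = dot (row i M)^T x.
  by rewrite dot_sum mxE; apply: eq_bigr => j _; rewrite !mxE.
by have := bf_cauchy_schwarz (row i M)^T x (@psd_form_id n); rewrite !bf1.
Qed.

Lemma vnorm_dot n (x : 'cV[R]_n) : vnorm x = sqrt (dot x x).
Proof. by rewrite /vnorm dot_sum; congr sqrt; apply: eq_bigr => i _; rewrite expr2. Qed.

Lemma dot_unit n (x : 'cV[R]_n) : vnorm x = R1 -> dot x x = R1.
Proof. by rewrite vnorm_dot => h; rewrite -(sqrt_sqrt _ (dot_ge0 x)) h; ring. Qed.

Definition gain_set m n (M : 'M[R]_(m, n)) : R -> Prop :=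
  fun r => r = R0 \/ exists x : 'cV[R]_n, vnorm x = R1 /\ r = vnorm (M *m x).

(* The supremum exists (the set is bounded by sqrt c), so spec_norm is it. *)
Lemma spec_norm_lub m n (M : 'M[R]_(m, n)) : is_lub (gain_set M) (spec_norm M).
Proof.
rewrite /spec_norm; apply: epsilon_spec.
have [c [hc0 hc]] := mx_bounded M.
have hb : bound (gain_set M).
  exists (sqrt c) => r [->|[x [hx ->]]]; first exact: sqrt_pos.
  by rewrite vnorm_dot; apply: sqrt_le_1_alt; have := hc x; rewrite (dot_unit hx) Rmult_1_r.
have [l hl] := @completeness (gain_set M) hb (ex_intro _ R0 (or_introl erefl)).
by exists l.
Qed.

Lemma spec_norm_ge0 m n (M : 'M[R]_(m, n)) : Rle R0 (spec_norm M).
Proof. by apply: (proj1 (spec_norm_lub M)); left. Qed.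

(* The defining inequality |M x|^2 <= ||M||^2 |x|^2, by rescaling x to a unit vector. *)
Lemma spec_norm_bound m n (M : 'M[R]_(m, n)) x :
  Rle (dot (M *m x) (M *m x)) (Rmult (Rmult (spec_norm M) (spec_norm M)) (dot x x)).
Proof.
have hsn := spec_norm_ge0 M; have hMx := dot_ge0 (M *m x).
have [c [hc0 hc]] := mx_bounded M.
have [e|hx] : dot x x = R0 \/ Rlt R0 (dot x x) by have := dot_ge0 x; lra.
  by have := hc x; rewrite e !Rmult_0_r.
set s := sqrt (dot x x).
have hs : Rlt R0 s by apply: sqrt_lt_R0.
have ss : Rmult s s = dot x x by apply: sqrt_sqrt; lra.
have hy : vnorm ((Rinv s) *: x) = R1.
  rewrite vnorm_dot dotZl dotZr -ss.
  have -> : Rmult (Rinv s) (Rmult (Rinv s) (Rmult s s)) = R1 by field; lra.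
  exact: sqrt_1.
have := proj1 (spec_norm_lub M) _ (or_intror (ex_intro _ _ (conj hy erefl))).
rewrite vnorm_dot -scalemxAr dotZl dotZr => hle.
have hinv : Rle R0 (Rinv s) by apply: Rlt_le; apply: Rinv_0_lt_compat.
have hMx' : Rle R0 (Rmult (Rinv s) (Rmult (Rinv s) (dot (M *m x) (M *m x)))).
  by apply: Rmult_le_pos => //; apply: Rmult_le_pos.
have hq := sqr_le_of_sqrt_le hMx' hle.
have -> : dot (M *m x) (M *m x)
  = Rmult (Rmult s s) (Rmult (Rinv s) (Rmult (Rinv s) (dot (M *m x) (M *m x)))) by field; lra.
rewrite ss (Rmult_comm (dot x x)); apply: Rmult_le_compat_r => //; exact: dot_ge0.
Qed.

Lemma spec_norm_le m n (M : 'M[R]_(m, n)) k : Rle R0 k ->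
  (forall x, Rle (dot (M *m x) (M *m x)) (Rmult (Rmult k k) (dot x x))) ->
  Rle (spec_norm M) k.
Proof.
move=> hk h; apply: (proj2 (spec_norm_lub M)) => r [->|[x [hx ->]]] //.
rewrite vnorm_dot -(sqrt_square k hk); apply: sqrt_le_1_alt.
by have := h x; rewrite (dot_unit hx) Rmult_1_r.
Qed.

Lemma spec_normN m n (M : 'M[R]_(m, n)) : spec_norm (- M) = spec_norm M.
Proof.
have hv x : dot (- M *m x) (- M *m x) = dot (M *m x) (M *m x).
  by rewrite mulNmx dotNl dotNr Ropp_involutive.
apply: Rle_antisym; apply: spec_norm_le; try exact: spec_norm_ge0;
  move=> x; rewrite ?hv; [apply: spec_norm_bound | rewrite -hv; apply: spec_norm_bound].
Qed.

Lemma spec_norm_le_of_form_bound n (D : 'M[R]_n) c : D^T = D -> Rle R0 c ->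
  (forall y, Rle (Ropp (Rmult c (dot y y))) (bf D y y) /\ Rle (bf D y y) (Rmult c (dot y y))) ->
  Rle (spec_norm D) c.
Proof.
move=> hD hc h; apply: spec_norm_le => // x.
apply: polarization_le => //; try exact: dot_ge0.
move=> t; set z := D *m x.
have h1 := proj2 (h (x + t *: z)); have h2 := proj1 (h (x - t *: z)).
move: h1 h2; rewrite bf_quadD // bf_quadB // !bfZr !bfZl ?dotDl ?dotDr ?dotNl ?dotNr
  ?dotZl ?dotZr.
have -> : bf D x z = dot z z by rewrite (bf_sym _ _ hD) /bf dotC.
rewrite (dotC z x); move: (dot x x) (dot z z) (dot x z) (bf D x x) (bf D z z).
by move=> X N xz qx qz h1 h2; nra.
Qed.
End SpectralNorm.

(* If a nonnegative
   V with V <= p * nn decreases by c * nn at every step, then V decays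
   geometrically along the orbits; a function g that never decreases along F
   and is dominated by nn must then be nonpositive. *)
Section LyapunovComparison.
Local Open Scope R_scope.
Variables (T : Type) (F : T -> T) (V nn : T -> R) (c p : R).
Hypotheses (hc : 0 < c) (hcp : c <= p).
Hypothesis V_decrease : forall z, V (F z) <= V z - c * nn z.
Hypothesis V_le : forall z, V z <= p * nn z.
Hypothesis V_ge0 : forall z, 0 <= V z.

Lemma lyapunov_geometric_decay t y : V (iter t F y) <= (1 - c / p) ^ t * V y.
Proof.
have hp : 0 < p by lra.
have step z : V (F z) <= (1 - c / p) * V z.
  have : c / p * V z <= c * nn z.
    have -> : c / p * V z = c * (V z / p) by field; lra.
    apply: Rmult_le_compat_l; first lra.
    by apply: (Rmult_le_reg_r p) => //; field_simplify; have := V_le z; lra.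
  by have := V_decrease z; lra.
elim: t => [|t IH] /=; first lra.
apply: Rle_trans (step _) _; rewrite Rmult_assoc; apply: Rmult_le_compat_l => //.
have : c / p <= 1 by apply: (Rmult_le_reg_r p) => //; field_simplify; lra.
lra.
Qed.

Lemma nonpos_of_monotone_along_orbits (g : T -> R) k : 0 <= k ->
  (forall z, g z <= g (F z)) -> (forall z, g z <= k * nn z) -> forall x, g x <= 0.
Proof.
move=> hk g_mono g_le x; have hp : 0 < p by lra.
apply: (@le0_of_geometric_bound _ (1 - c / p) (k / c * V x)).
  have rho_lt : 0 < c / p by apply: Rdiv_lt_0_compat.
  have rho_ge : c / p <= 1 by apply: (Rmult_le_reg_r p) => //; field_simplify; lra.
  lra.
have g_orbit t : g x <= g (iter t F x).
  by elim: t => [|t IH] /=; [lra | exact: Rle_trans IH (g_mono _)].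
move=> t; have := g_orbit t; set y := iter t F x => gxy.
have nn_le : nn y <= V y / c.
  by apply: (Rmult_le_reg_r c) => //; field_simplify; have := V_decrease y; have := V_ge0 (F y); lra.
have := Rmult_le_compat_l k _ _ hk (Rle_trans _ _ _ nn_le
  (Rmult_le_compat_r (/ c) _ _ (Rlt_le _ _ (Rinv_0_lt_compat _ hc)) (lyapunov_geometric_decay t x))).
have := g_le y.
have -> : (1 - c / p) ^ t * (k / c * V x) = k * ((1 - c / p) ^ t * V x * / c) by field; lra.
lra.
Qed.
End LyapunovComparison.

Definition form_le n (M : 'M[R]_n) (c : R) : Prop :=
  forall y, Rle (bf M y y) (Rmult c (dot y y)).

Lemma form_bounded n (M : 'M[R]_n) : exists c, Rle R0 c /\
  forall y, Rle (Rabs (bf M y y)) (Rmult c (dot y y)).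
Proof.
have [c0 [hc0 hc]] := mx_bounded M.
exists (Rplus 1 c0); split; first lra.
move=> y; apply: abs_le_of_sqr; first by apply: Rmult_le_pos; [lra | exact: dot_ge0].
have := bf_cauchy_schwarz y (M *m y) (@psd_form_id n); rewrite !bf1 -/(bf M y y) => hcs.
have := hc y; have := dot_ge0 y; have := dot_ge0 (M *m y); nra.
Qed.

Lemma form_le_of_bounded n (M : 'M[R]_n) : exists c, Rle R0 c /\ form_le M c.
Proof.
have [c [hc0 hc]] := form_bounded M.
by exists c; split => // y; apply: Rle_trans (Rle_abs _) (hc y).
Qed.

Section LQGame.
Variables (d m1 m2 : nat) (A : 'M[R]_d) (B : 'M[R]_(d, m1)) (C : 'M[R]_(d, m2))
  (Q : 'M[R]_d) (Ru : 'M[R]_m1) (Rv : 'M[R]_m2).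
Hypotheses (hRu : posdef Ru) (hRv : posdef Rv).

Definition stage_cost (L : 'M[R]_(m2, d)) (K : 'M[R]_(m1, d)) (x : 'cV[R]_d) : R :=
  Rplus (Rminus (bf Q x x) (bf Rv (L *m x) (L *m x))) (bf Ru (K *m x) (K *m x)).

Definition closed_loop (L : 'M[R]_(m2, d)) (K : 'M[R]_(m1, d)) : 'M[R]_d :=
  A - C *m L - B *m K.

Lemma riccati_gain_sym (P : 'M[R]_d) : P^T = P ->
  (Ru + B^T *m P *m B)^T = Ru + B^T *m P *m B.
Proof. by move=> hP; rewrite linearD /= !trmx_mul trmxK hP (proj1 hRu) mulmxA. Qed.

Lemma riccati_gain_posdef (P : 'M[R]_d) : posdef P -> posdef (Ru + B^T *m P *m B).
Proof.
move=> hP; have [hPs hPq] := posdef_psd_form hP.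
split; first exact: riccati_gain_sym.
move=> x hx; rewrite -bfE bfD bf_congr.
have := proj2 hRu x hx; rewrite -bfE; have := hPq (B *m x); lra.
Qed.

(* Completion of squares for the minimizing player: for every gain K, the
   inner Riccati right-hand side plus the H-weighted distance of K to K(L)
   equals the stage cost plus the closed-loop cost-to-go. *)
Lemma riccati_completion (P : 'M[R]_d) (L : 'M[R]_(m2, d)) (K : 'M[R]_(m1, d)) x :
  P^T = P -> (Ru + B^T *m P *m B) \in unitmx ->
  let H := Ru + B^T *m P *m B in
  let k0 := K_of A B C Ru L P *m x in
  let y := closed_loop L K *m x in
  Rplus (bf (inner_riccati_rhs A B C Q Ru Rv L P) x x) (bf H (K *m x - k0) (K *m x - k0))
  = Rplus (stage_cost L K x) (bf P y y).
Proof.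
move=> hP hU H k0 y.
set a := (A - C *m L) *m x; set w := B^T *m (P *m a); set k := K *m x.
have k0E : k0 = invmx H *m w by rewrite /k0 /K_of /w /a !mulmxA.
have Hk0 : H *m k0 = w by rewrite k0E mulmxA mulmxV // mul1mx.
have hH : H^T = H by apply: riccati_gain_sym.
have gain_term : bf ((A - C *m L)^T *m P *m B *m invmx H *m B^T *m P *m (A - C *m L)) x x
    = bf H k0 k0.
  rewrite /bf -!mulmxA -/a -/w -k0E dot_mul trmxK -/a dot_mul hP dot_mul -/w -Hk0.
  exact: dotC.
have Hk : bf H k k = Rplus (bf Ru k k) (bf P (B *m k) (B *m k)) by rewrite bfD bf_congr.
have Hkk0 : bf H k k0 = bf P (B *m k) a by rewrite /bf Hk0 /w dot_mul trmxK.
have yE : y = a - B *m k by rewrite /y /closed_loop mulmxBl -mulmxA.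
have rhsE : bf (inner_riccati_rhs A B C Q Ru Rv L P) x x =
    Rminus (Rplus (Rminus (bf Q x x) (bf Rv (L *m x) (L *m x))) (bf P a a)) (bf H k0 k0).
  by rewrite -gain_term /inner_riccati_rhs -/H !bfB !bfD bfN !bf_congr -/a.
rewrite yE rhsE bf_quadB // bf_quadB // Hk Hkk0 (bf_sym (B *m k) a hP) /stage_cost /Rminus -/k.
ring.
Qed.

Lemma Pstar_cost_identity (L : 'M[R]_(m2, d)) (P : 'M[R]_d) x :
  is_Pstar A B C Q Ru Rv L P ->
  let K := K_of A B C Ru L P in
  let y := closed_loop L K *m x in
  bf P x x = Rplus (stage_cost L K x) (bf P y y).
Proof.
move=> [hP [e _]] K y.
have hU := posdef_unit (riccati_gain_posdef hP).
have := riccati_completion L K x (proj1 hP) hU.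
by rewrite /= -e subrr bf00 Rplus_0_r.
Qed.

Lemma Pstar_cost_le (L : 'M[R]_(m2, d)) (P : 'M[R]_d) (K : 'M[R]_(m1, d)) x :
  is_Pstar A B C Q Ru Rv L P ->
  let y := closed_loop L K *m x in
  Rle (bf P x x) (Rplus (stage_cost L K x) (bf P y y)).
Proof.
move=> [hP [e _]] y.
have hH := riccati_gain_posdef hP.
have := riccati_completion L K x (proj1 hP) (posdef_unit hH).
rewrite /= -e -/y; have := proj2 (posdef_psd_form hH) (K *m x - K_of A B C Ru L P *m x).
lra.
Qed.

Lemma omega_margin zeta (L : 'M[R]_(m2, d)) x : in_Omega Q Rv zeta L ->
  Rle (Rmult zeta (dot x x)) (Rminus (bf Q x x) (bf Rv (L *m x) (L *m x))).
Proof. by move=> /psd_psd_form [_ hOm]; have := hOm x; rewrite !bfB bf_congr bf_scalar; lra. Qed.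

Lemma stage_cost_ge zeta (L : 'M[R]_(m2, d)) (K : 'M[R]_(m1, d)) x :
  in_Omega Q Rv zeta L -> Rle (Rmult zeta (dot x x)) (stage_cost L K x).
Proof.
move=> hOm; have := omega_margin x hOm; have := proj2 (posdef_psd_form hRu) (K *m x).
by rewrite /stage_cost; lra.
Qed.

(* Completion of squares for the maximizing player.  The GARE says that the
   block system M [K; L0] = [B^T P A; C^T P A] has a solution, and then, for
   the fixed gain K and every L, the cost defect is the (R^v - C^T P C)-weighted
   distance of L to L0. *)
Lemma gare_completion (P : 'M[R]_d) : P^T = P -> solves_GARE A B C Q Ru Rv P ->
  exists (K : 'M[R]_(m1, d)) (L0 : 'M[R]_(m2, d)), forall L x,
    let y := closed_loop L K *m x in
    let e := (L - L0) *m x in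
    bf P x x = Rplus (Rplus (stage_cost L K x) (bf P y y)) (bf (Rv - C^T *m P *m C) e e).
Proof.
move=> hP [hU hG].
set M := gare_mid B C Ru Rv P in hU hG.
set b := col_mx (B^T *m P *m A) (C^T *m P *m A) in hG.
set X := invmx M *m b.
have MX : M *m X = b by rewrite /X mulmxA mulmxV // mul1mx.
exists (usubmx X), (dsubmx X) => L x y e.
have XE : X = col_mx (usubmx X) (dsubmx X) by rewrite vsubmxK.
set K := usubmx X in XE y *; set L0 := dsubmx X in XE e *.
move: MX; rewrite XE /M /gare_mid mul_block_col /b => /eq_col_mx [row1 row2].
have hG' : P = A^T *m P *m A + Q - (A^T *m P *m B *m K + A^T *m P *m C *m L0).
  by rewrite {1}hG -[_ *m invmx M *m b]mulmxA -/X XE mul_row_col.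
set k := K *m x; set l := L0 *m x; set m := L *m x; set a := A *m x.
have row1_k : Rplus (Rplus (bf Ru k k) (bf P (B *m k) (B *m k))) (bf P (B *m k) (C *m l))
    = bf P (B *m k) a.
  have := congr1 (fun Y => dot k (Y *m x)) row1.
  by rewrite /= mulmxDl dotDr dot_mulmx bfD bf_congr dot_congr_mul dot_congr.
have row2_v v : Rplus (bf P (C *m v) (B *m k)) (Rplus (Ropp (bf Rv v l)) (bf P (C *m v) (C *m l)))
    = bf P (C *m v) a.
  have := congr1 (fun Y => dot v (Y *m x)) row2.
  by rewrite /= mulmxDl dotDr dot_mulmx bfD bfN bf_congr dot_congr_mul dot_congr.
have gare_x : bf P x x
    = Rminus (Rminus (Rplus (bf P a a) (bf Q x x)) (bf P a (B *m k))) (bf P a (C *m l)).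
  have := congr1 (fun Y => dot x (Y *m x)) hG'.
  rewrite /= mulmxBl !mulmxDl dotBr !dotDr dot_congr !dot_congr_mul -/(bf Q x x) => h.
  by apply: (etrans h); rewrite -/a -/k -/l /Rminus; ring.
have yE : y = a - C *m m - B *m k by rewrite /y /closed_loop !mulmxBl -!mulmxA.
have eE : e = m - l by rewrite /e mulmxBl.
have CeE : C *m e = C *m m - C *m l by rewrite eE mulmxBr.
(* expand all forms; what remains is a linear identity between scalar
   products, closed by the row equations, the GARE and symmetry of P *)
rewrite yE bfB bf_congr CeE eE /stage_cost -/m -/k.
rewrite !bf_quadB // ?(proj1 hRv) // ?bfBl ?bfBr.
have row2_m := row2_v m; have row2_l := row2_v l.
have := bf_sym (B *m k) a hP; have := bf_sym (C *m m) a hP; have := bf_sym (C *m l) a hP.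
have := bf_sym (C *m m) (B *m k) hP; have := bf_sym (C *m l) (B *m k) hP.
move=> *; rewrite gare_x; lra.
Qed.

Corollary gare_saddle (P : 'M[R]_d) : P^T = P -> solves_GARE A B C Q Ru Rv P ->
  psd_form (Rv - C^T *m P *m C) ->
  exists K : 'M[R]_(m1, d), forall L x,
    let y := closed_loop L K *m x in Rle (Rplus (stage_cost L K x) (bf P y y)) (bf P x x).
Proof.
move=> hP hG [_ hW]; have [K [L0 hK]] := gare_completion hP hG.
by exists K => L x /=; have /= := hK L x; have := hW ((L - L0) *m x); lra.
Qed.

(* Comparison with the GARE solution: on Omega, P_L^* <= P^*.  Along the orbits
   of A - C L - B K^*, the form of P^* decreases by zeta |z|^2 while
   P_L^* - P^* can only increase. *)
Lemma Pstar_le_gare_solution zeta p (Pst : 'M[R]_d) (Kst : 'M[R]_(m1, d))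
    (L : 'M[R]_(m2, d)) (P : 'M[R]_d) :
  Rlt R0 zeta -> Rle zeta p -> psd_form Pst -> form_le Pst p ->
  (forall L x, let y := closed_loop L Kst *m x in
    Rle (Rplus (stage_cost L Kst x) (bf Pst y y)) (bf Pst x x)) ->
  in_Omega Q Rv zeta L -> is_Pstar A B C Q Ru Rv L P ->
  forall x, Rle (bf P x x) (bf Pst x x).
Proof.
move=> hz hzp [_ Pst_ge0] Pst_le saddle hOm hP x.
pose F (z : 'cV[R]_d) := closed_loop L Kst *m z.
have Pst_decrease z : Rle (bf Pst (F z) (F z)) (Rminus (bf Pst z z) (Rmult zeta (dot z z))).
  by have := saddle L z; have := stage_cost_ge Kst z hOm; rewrite -/(F z); lra.
have gap_mono z : Rle (Rminus (bf P z z) (bf Pst z z)) (Rminus (bf P (F z) (F z)) (bf Pst (F z) (F z))).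
  by have := saddle L z; have := Pstar_cost_le Kst z hP; rewrite -/(F z); lra.
have [c [hc0 hc]] := form_le_of_bounded P.
have gap_le z : Rle (Rminus (bf P z z) (bf Pst z z)) (Rmult c (dot z z)).
  by have := hc z; have := Pst_ge0 z; lra.
have /= := nonpos_of_monotone_along_orbits (g := fun z => Rminus (bf P z z) (bf Pst z z))
  hz hzp Pst_decrease Pst_le Pst_ge0 hc0 gap_mono gap_le x.
lra.
Qed.

Lemma Pstar_uniform_bound zeta (Pst : 'M[R]_d) :
  Rlt R0 zeta -> posdef Pst -> solves_GARE A B C Q Ru Rv Pst ->
  psd_form (Rv - C^T *m Pst *m C) ->
  exists p, Rle zeta p /\ forall L P, in_Omega Q Rv zeta L -> is_Pstar A B C Q Ru Rv L P ->
    form_le P p.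
Proof.
move=> hz hPst hG hW.
have [Kst saddle] := gare_saddle (proj1 hPst) hG hW.
have [p0 [hp0 Pst_le]] := form_le_of_bounded Pst.
have hzp : Rle zeta (Rplus p0 zeta) by lra.
have Pst_le' : form_le Pst (Rplus p0 zeta).
  by move=> z; have := Pst_le z; have := dot_ge0 z; nra.
exists (Rplus p0 zeta); split => // L P hOm hP z.
apply: Rle_trans (Pst_le' z).
exact: Pstar_le_gare_solution hz hzp (posdef_psd_form hPst) Pst_le' saddle hOm hP z.
Qed.

Section Perturbation.
Variables (zeta p cQ rv cC : R).
Hypotheses (hzeta : Rlt R0 zeta) (hzp : Rle zeta p).
Hypotheses (hcQ : Rle R0 cQ) (hrv : Rle R0 rv) (hcC : Rle R0 cC).
Hypotheses (Q_le : form_le Q cQ) (Rv_le : form_le Rv rv).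
Hypothesis C_le : forall z, Rle (dot (C *m z) (C *m z)) (Rmult cC (dot z z)).

Definition loop_const : R := Rplus (Rmult 2 p) (Rmult 3 (Rmult p cC)).
Definition lip_const : R := Rplus (Rmult 2 (Rplus cQ rv)) loop_const.

Lemma stage_cost_perturbation (L L' : 'M[R]_(m2, d)) (K : 'M[R]_(m1, d)) x :
  in_Omega Q Rv zeta L ->
  Rle (stage_cost L' K x)
    (Rplus (stage_cost L K x) (Rmult (Rmult (Rmult 2 (Rplus cQ rv)) (spec_norm (L' - L))) (dot x x))).
Proof.
move=> hOm; set de := spec_norm (L' - L); set D := L' - L.
have hde : Rle R0 de := spec_norm_ge0 _.
have hN := dot_ge0 x.
have L'E : L' *m x = L *m x + D *m x by rewrite /D mulmxBl addrC subrK.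
have RvL_le : Rle (bf Rv (L *m x) (L *m x)) (Rmult cQ (dot x x)).
  have := omega_margin x hOm; have := Q_le x; have := Rmult_le_pos _ _ (Rlt_le _ _ hzeta) hN.
  lra.
have RvD_le : Rle (bf Rv (D *m x) (D *m x)) (Rmult (Rmult rv (Rmult de de)) (dot x x)).
  apply: Rle_trans (Rv_le _) _; rewrite Rmult_assoc; apply: Rmult_le_compat_l => //.
  exact: spec_norm_bound.
have [cross_lo _] := abs_le_inv (bf_cross_le (posdef_psd_form hRv) hcQ hrv hde hN RvL_le RvD_le).
have := proj2 (posdef_psd_form hRv) (D *m x).
rewrite /stage_cost L'E bf_quadD ?(proj1 hRv) //; lra.
Qed.

Lemma closed_loop_perturbation (P : 'M[R]_d) (L L' : 'M[R]_(m2, d)) (K : 'M[R]_(m1, d)) x :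
  psd_form P -> form_le P p -> Rle (spec_norm (L' - L)) R1 ->
  let y := closed_loop L K *m x in
  let y' := closed_loop L' K *m x in
  Rle (bf P y y) (Rmult p (dot x x)) ->
  Rle (bf P y' y') (Rplus (bf P y y) (Rmult (Rmult loop_const (spec_norm (L' - L))) (dot x x))).
Proof.
move=> hP P_le hde1 y y' Py_le; set de := spec_norm (L' - L); set w := C *m ((L' - L) *m x).
have hde : Rle R0 de := spec_norm_ge0 _.
have hN := dot_ge0 x.
have hp : Rle R0 p by lra.
have y'E : y' = y - w.
  rewrite /y' /y /w /closed_loop mulmxA -mulmxBl; congr (_ *m _).
  by rewrite mulmxBr opprB addrA [A - _ - _ + _]addrAC subrK addrAC.
have w_le : Rle (bf P w w) (Rmult (Rmult (Rmult p cC) (Rmult de de)) (dot x x)).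
  apply: Rle_trans (P_le w) _.
  have := Rmult_le_compat_l cC _ _ hcC (spec_norm_bound (L' - L) x).
  have := C_le ((L' - L) *m x); rewrite -/w => h1 h2.
  have := Rmult_le_compat_l p _ _ hp (Rle_trans _ _ _ h1 h2).
  by rewrite -/de; lra.
have hpC : Rle R0 (Rmult p cC) by apply: Rmult_le_pos.
have [cross_lo _] := abs_le_inv (bf_cross_le hP hp hpC hde hN Py_le w_le).
have de2 : Rle (Rmult de de) de by have := Rmult_le_compat_l de _ _ hde hde1; rewrite Rmult_1_r.
have := Rmult_le_compat_r (dot x x) _ _ hN (Rmult_le_compat_l (Rmult p cC) _ _ hpC de2).
have := proj2 hP w.
rewrite y'E bf_quadB ?(proj1 hP) // /loop_const; lra.
Qed.

(* With K = K(L) and F = A - C L' - B K, the form of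
   P decreases by zeta/2 |z|^2 along F, while P' - (1 + kappa) P never decreases
   along F for kappa = 2 lip_const ||L' - L|| / zeta; the comparison principle
   gives P' - P <= kappa P <= kappa p |x|^2. *)
Lemma Pstar_one_sided_lipschitz (L L' : 'M[R]_(m2, d)) (P P' : 'M[R]_d) :
  in_Omega Q Rv zeta L -> in_Omega Q Rv zeta L' ->
  is_Pstar A B C Q Ru Rv L P -> is_Pstar A B C Q Ru Rv L' P' -> form_le P p -> form_le P' p ->
  Rle (spec_norm (L' - L)) R1 -> Rle (Rmult loop_const (spec_norm (L' - L))) (Rdiv zeta 2) ->
  forall x, Rle (Rminus (bf P' x x) (bf P x x))
    (Rmult (Rmult (Rdiv (Rmult 2 (Rmult lip_const p)) zeta) (spec_norm (L' - L))) (dot x x)).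
Proof.
move=> hOm hOm' hP hP' P_le P'_le hde1 hde2 x.
have hde := spec_norm_ge0 (L' - L); set de := spec_norm (L' - L) in hde hde1 hde2 *.
set K := K_of A B C Ru L P.
pose F (z : 'cV[R]_d) := closed_loop L' K *m z.
have P_psd := posdef_psd_form (proj1 hP); have [_ P_ge0] := P_psd.
have [_ P'_ge0] := posdef_psd_form (proj1 hP').
have hN := @dot_ge0 d.
have loop_decrease z : Rle (bf P (closed_loop L K *m z) (closed_loop L K *m z))
    (Rminus (bf P z z) (Rmult zeta (dot z z))).
  by have := stage_cost_ge K z hOm; have /= := Pstar_cost_identity z hP; rewrite -/K; lra.
have loop_le z : Rle (bf P (closed_loop L K *m z) (closed_loop L K *m z)) (Rmult p (dot z z)).
  by have := loop_decrease z; have := P_le z; have := Rmult_le_pos _ _ (Rlt_le _ _ hzeta) (hN z); lra.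
have F_perturb z := closed_loop_perturbation (K := K) (x := z) P_psd P_le hde1 (loop_le z).
have F_decrease z : Rle (bf P (F z) (F z)) (Rminus (bf P z z) (Rmult (Rdiv zeta 2) (dot z z))).
  have := Rmult_le_compat_r _ _ _ (hN z) hde2.
  by have := loop_decrease z; have /= := F_perturb z; rewrite -/de -/(F z); lra.
set kap := Rdiv (Rmult (Rmult 2 lip_const) de) zeta.
have hlip : Rle R0 lip_const.
  rewrite /lip_const /loop_const; have := Rmult_le_pos _ _ (Rle_trans _ _ _ (Rlt_le _ _ hzeta) hzp) hcC.
  lra.
have kap_ge0 : Rle R0 kap.
  rewrite /kap /Rdiv; apply: Rmult_le_pos; last by apply: Rlt_le; apply: Rinv_0_lt_compat.
  by apply: Rmult_le_pos => //; apply: Rmult_le_pos => //; lra.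
have kapE N : Rmult kap (Rmult (Rdiv zeta 2) N) = Rmult (Rmult lip_const de) N.
  by rewrite /kap; field; lra.
pose g z := Rminus (Rminus (bf P' z z) (bf P z z)) (Rmult kap (bf P z z)).
have g_mono z : Rle (g z) (g (F z)).
  have := Rmult_le_compat_l kap _ _ kap_ge0
    (ltac:(have := F_decrease z; lra) : Rle (Rmult (Rdiv zeta 2) (dot z z)) (Rminus (bf P z z) (bf P (F z) (F z)))).
  have /= := Pstar_cost_le K z hP'; have /= := Pstar_cost_identity z hP.
  have := stage_cost_perturbation L' K z hOm; have /= := F_perturb z.
  by rewrite /g kapE /lip_const -/de -/(F z) -/K; lra.
have g_le z : Rle (g z) (Rmult p (dot z z)).
  by have := P'_le z; have := P_ge0 z; have := Rmult_le_pos _ _ kap_ge0 (P_ge0 z); rewrite /g; lra.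
have hz2 : Rlt R0 (Rdiv zeta 2) by lra.
have /= := nonpos_of_monotone_along_orbits hz2 (ltac:(lra) : Rle (Rdiv zeta 2) p)
  F_decrease P_le P_ge0 (ltac:(lra) : Rle R0 p) g_mono g_le x.
have := Rmult_le_compat_l kap _ _ kap_ge0 (P_le x).
have -> : Rmult (Rmult (Rdiv (Rmult 2 (Rmult lip_const p)) zeta) de) (dot x x)
    = Rmult kap (Rmult p (dot x x)) by rewrite /kap; field; lra.
by rewrite /g; lra.
Qed.
End Perturbation.

Lemma Pstar_local_lipschitz zeta p : Rlt R0 zeta -> Rle zeta p ->
  (forall L P, in_Omega Q Rv zeta L -> is_Pstar A B C Q Ru Rv L P -> form_le P p) ->
  exists BL BP : R, Rlt R0 BL /\ Rlt R0 BP /\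
    forall (L L' : 'M[R]_(m2, d)) (P P' : 'M[R]_d),
      in_Omega Q Rv zeta L -> in_Omega Q Rv zeta L' -> Rle (spec_norm (L' - L)) BL ->
      is_Pstar A B C Q Ru Rv L P -> is_Pstar A B C Q Ru Rv L' P' ->
      forall x, Rle (Rminus (bf P' x x) (bf P x x))
        (Rmult (Rmult BP (spec_norm (L' - L))) (dot x x)).
Proof.
move=> hz hzp P_bound.
have [cQ [hcQ Q_le]] := form_le_of_bounded Q.
have [rv [hrv Rv_le]] := form_le_of_bounded Rv.
have [cC [hcC C_le]] := mx_bounded C.
have hloop : Rlt R0 (loop_const p cC).
  by rewrite /loop_const; have := Rmult_le_pos _ _ (Rle_trans _ _ _ (Rlt_le _ _ hz) hzp) hcC; lra.
have hlip : Rlt R0 (lip_const p cQ rv cC) by rewrite /lip_const; lra.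
exists (Rmin 1 (Rdiv zeta (Rmult 2 (loop_const p cC)))),
  (Rdiv (Rmult 2 (Rmult (lip_const p cQ rv cC) p)) zeta).
split; first by apply: Rmin_glb_lt; [lra | apply: Rdiv_lt_0_compat; lra].
split; first by apply: Rdiv_lt_0_compat => //; apply: Rmult_lt_0_compat; [lra | apply: Rmult_lt_0_compat; lra].
move=> L L' P P' hOm hOm' hde hP hP'.
apply: (Pstar_one_sided_lipschitz hz hzp hcQ hrv hcC Q_le Rv_le C_le hOm hOm' hP hP'
  (P_bound _ _ hOm hP) (P_bound _ _ hOm' hP')).
- exact: Rle_trans _ _ _ hde (Rmin_l _ _).
- have := Rmult_le_compat_l _ _ _ (Rlt_le _ _ hloop) (Rle_trans _ _ _ hde (Rmin_r _ _)).
  have -> : Rmult (loop_const p cC) (Rdiv zeta (Rmult 2 (loop_const p cC))) = Rdiv zeta 2.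
    by field; lra.
  done.
Qed.
End LQGame.

Unset Implicit Arguments.

(* Main theorem: the spectral-norm Lipschitz bound follows by applying the
   one-sided quadratic-form bound in both directions and polarizing. *)
Theorem mainTheorem16 (d m1 m2 : nat)
    (A : 'M[R]_d) (B : 'M[R]_(d, m1)) (C : 'M[R]_(d, m2))
    (Q : 'M[R]_d) (Ru : 'M[R]_m1) (Rv : 'M[R]_m2) (Sigma0 : 'M[R]_d)
    (Pst : 'M[R]_d) (zeta : R) :
  posdef Q -> posdef Ru -> posdef Rv -> posdef Sigma0 ->
  (* standing assumption (i) *)
  minimal_pd_GARE_sol A B C Q Ru Rv Pst ->
  posdef (Rv - C^T *m Pst *m C) ->
  (* standing assumption (ii) *)
  posdef (Q - (Lstar A B C Ru Rv Pst)^T *m Rv *m Lstar A B C Ru Rv Pst) ->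
  Rlt R0 zeta ->
  Rlt zeta (sigma_min (Q - (Lstar A B C Ru Rv Pst)^T *m Rv *m Lstar A B C Ru Rv Pst)) ->
  exists BL BP : R, Rlt R0 BL /\ Rlt R0 BP /\
    forall (L L' : 'M[R]_(m2, d)) (P P' : 'M[R]_d),
      in_Omega Q Rv zeta L -> in_Omega Q Rv zeta L' ->
      Rle (spec_norm (L' - L)) BL ->
      is_Pstar A B C Q Ru Rv L P -> is_Pstar A B C Q Ru Rv L' P' ->
      Rle (spec_norm (P' - P)) (Rmult BP (spec_norm (L' - L))).
Proof.
move=> _ hRu hRv _ [hPst [hGare _]] hW _ hz _.
have [p [hzp P_bound]] :=
  Pstar_uniform_bound hRu hRv hz hPst hGare (posdef_psd_form hW).
have [BL [BP [hBL [hBP lip]]]] := Pstar_local_lipschitz hRu hRv hz hzp P_bound.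
exists BL, BP; split => //; split => // L L' P P' hOm hOm' hde hP hP'.
have normLL' : spec_norm (L - L') = spec_norm (L' - L) by rewrite -opprB spec_normN.
have hde' : Rle (spec_norm (L - L')) BL by rewrite normLL'.
have hnorm := spec_norm_ge0 (L' - L).
apply: spec_norm_le_of_form_bound; first by rewrite linearB /= (proj1 (proj1 hP)) (proj1 (proj1 hP')).
  exact: Rmult_le_pos (Rlt_le _ _ hBP) hnorm.
move=> y; rewrite bfB; have := lip _ _ _ _ hOm hOm' hde hP hP' y.
by have := lip _ _ _ _ hOm' hOm hde' hP' hP y; rewrite normLL'; lra.
Qed.
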